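(* Consider $m$ shoes and a partition of the generic shoe sole into $J$ subsets $A_1,\dots,A_J$. For shoe $i$ and subset $j$, let $S_{ij}\ge 0$ be the area of the contact surface of shoe $i$ in $A_j$, and let $n_{ij}\in\{0,1,2,\dots\}$ be the observed number of randomly acquired characteristics (RACs) of shoe $i$ in $A_j$. Write $n_i=\sum_{j} n_{ij}$ and $n_{\cdot j}=\sum_{i=1}^m n_{ij}$. The model is: $a_1,\dots,a_m$ are i.i.d. positive random variables with $E(a_i)=1$ and density $h_\theta$ from a family indexed by $\theta$, and conditionally on $a_i$ the counts $N_{i1},\dots,N_{iJ}$ are independent with $N_{ij}\mid a_i\sim \mathrm{Poisson}(\lambda_j S_{ij} a_i)$, where $\lambda_1,\dots,\lambda_J>0$ are unknown. Consider the following three estimators of $(\lambda_1,\dots,\lambda_J)$: (i) the naive estimator $\hat\lambda_j=\frac{1}{|m_j|}\sum_{i\in m_j}\frac{n_{ij}}{S_{ij}}$, where $m_j=\{i: S_{ij}>0\}$; (ii) the random effects estimator: $(\hat\lambda_1,\dots,\hat\lambda_J)$ together with $\hat\theta$ maximize $$L(\lambda_1,\dots,\lambda_J,\theta)=\prod_{i=1}^m\int\prod_{j=1}^J\frac{e^{-\lambda_j a S_{ij}}(\lambda_j a S_{ij})^{n_{ij}}}{n_{ij}!}\,h_\theta(a)\,da;$$ (iii) the conditional maximum likelihood (CML) estimator: $(\hat\lambda_1,\dots,\hat\lambda_J)$ with positive entries solving, for every $k=1,\dots,J$, $$\sum_{i=1}^m\left[\frac{n_{ik}}{\hat\lambda_k}-\frac{n_i}{\sum_{j'}S_{ij'}\hat\lambda_{j'}}S_{ik}\right]=0$$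 (these are the score equations of the conditional log-likelihood $\sum_i\sum_j n_{ij}[\log\lambda_j+\log S_{ij}-\log(\sum_{j'}S_{ij'}\lambda_{j'})]$, obtained by conditioning on $N_i=n_i$; this determines $\lambda$ only up to a positive multiplicative constant). If $S_{ij}=S_j$ for all $i,j$ (all shoes have the same contact surface areas in each subset), with $S_j>0$ for all $j$, then for each of the three estimators, $$\frac{\hat\lambda_j}{\hat\lambda_k}=\frac{n_{\cdot j}}{n_{\cdot k}}\cdot\frac{S_k}{S_j}$$ for any $j,k$ with $n_{\cdot k}>0$.
   Context: RACs are randomly acquired characteristics (e.g. scratches, holes) on shoe soles; $a_i$ models the degree of wear and tear of shoe $i$. The CML estimator is defined only up to a common positive scale, but the ratios $\hat\lambda_j/\hat\lambda_k$ are well defined. *)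

From HB Require Import structures.
From mathcomp Require Import all_boot all_order all_algebra.
From mathcomp Require Import all_classical all_reals all_analysis.
Set Implicit Arguments. Unset Strict Implicit. Unset Printing Implicit Defensive.
Import Order.TTheory GRing.Theory Num.Theory.
Local Open Scope ring_scope.
Local Open Scope classical_set_scope.

Section Shoes.
Variables (R : realType) (m J : nat).
Variables (S : 'I_m -> 'I_J -> R) (n : 'I_m -> 'I_J -> nat).

Definition n_row (i : 'I_m) : nat := (\sum_(j < J) n i j)%N.
Definition n_col (j : 'I_J) : nat := (\sum_(i < m) n i j)%N.

Definition naive_est (j : 'I_J) : R :=
  (#|[set i : 'I_m | 0 < S i j]|%:R)^-1 *
  \sum_(i < m | 0 < S i j) (n i j)%:R / S i j.

Definition poisson_prod (lam : 'I_J -> R) (i : 'I_m) (a : R) : R :=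
  \prod_(j < J)
    (expR (- (lam j * a * S i j)) * (lam j * a * S i j) ^+ n i j
       / ((n i j)`!)%:R).

Definition RE_lik (Theta : Type) (h : Theta -> R -> R)
  (lam : 'I_J -> R) (theta : Theta) : R :=
  \prod_(i < m)
    fine (\int[@lebesgue_measure R]_(a in [set x : R | (0 < x)%R])
             (poisson_prod lam i a * h theta a)%:E).

Definition is_RE_est (Theta : Type) (h : Theta -> R -> R)
  (lam : 'I_J -> R) (theta : Theta) : Prop :=
  (forall j, 0 < lam j) /\
  (forall (lam' : 'I_J -> R) (theta' : Theta), (forall j, 0 < lam' j) ->
     RE_lik h lam' theta' <= RE_lik h lam theta).

Definition is_CML_est (lam : 'I_J -> R) : Prop :=
  (forall j, 0 < lam j) /\
  (forall k : 'I_J,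
     \sum_(i < m) ((n i k)%:R / lam k
        - (n_row i)%:R / (\sum_(j' < J) S i j' * lam j') * S i k) = 0).
End Shoes.

Definition is_mean1_pos_density (R : realType) (f : R -> R) : Prop :=
  measurable_fun [set x : R | (0 < x)%R] f /\
  (forall a, 0 < a -> 0 <= f a) /\
  (\int[@lebesgue_measure R]_(a in [set x : R | (0 < x)%R]) (f a)%:E = 1)%E /\
  (\int[@lebesgue_measure R]_(a in [set x : R | (0 < x)%R]) (a * f a)%:E = 1)%E.

(* With common areas S_j, each estimator is proportional to n_.j / S_j.  For
   the naive estimator this is a direct computation, and for the CML estimator
   it is the score equation itself, because sum_i n_i / sum_j' S_j' lam_j' does
   not depend on k.  For the random effects estimator, the Poisson product sees
   lam only through prod_j lam_j^n_ij and the total intensity sum_j lam_j S_j.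
   Moving an amount t of intensity from x_k = lam_k S_k to x_j = lam_j S_j
   therefore multiplies the likelihood by (1 + t/x_j)^n_.j (1 - t/x_k)^n_.k;
   at a maximum this factor is at most 1 for all -x_j < t < x_k, and the
   first-order condition at t = 0, obtained through Bernoulli's inequality,
   gives n_.j / x_j = n_.k / x_k. *)

From HB Require Import structures.
From mathcomp Require Import all_boot all_order all_algebra.
From mathcomp Require Import all_classical all_reals all_analysis.
From mathcomp Require Import measurable_realfun.
From mathcomp Require Import ring lra.
Set Implicit Arguments.
Unset Strict Implicit.
Unset Printing Implicit Defensive.

Import Order.TTheory GRing.Theory Num.Theory.
Local Open Scope ring_scope.
Local Open Scope classical_set_scope.

Lemma div_eq_of_proportional (R : fieldType) (a b c x y u v : R) :
  a = c * (x * u) -> b = c * (y * v) -> b != 0 -> u != 0 ->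
  x / y = a / b * (v / u).
Proof.
move=> -> ->; rewrite !mulf_eq0 !negb_or => /and3P[c0 y0 v0] u0.
by field; rewrite c0 y0 v0 u0.
Qed.

Lemma bernoulli_ineq (R : realDomainType) (u : R) (a : nat) :
  -1 <= u -> 1 + a%:R * u <= (1 + u) ^+ a.
Proof.
move=> u_ge; elim: a => [|a IH]; first by rewrite mul0r addr0 expr0.
rewrite exprS -natr1.
have := ler_wpM2l (_ : 0 <= 1 + u) IH.
have : 0 <= a%:R * u * u by rewrite -mulrA mulr_ge0 // -expr2 sqr_ge0.
nra.
Qed.

Lemma perturb_le1_div_le (R : realFieldType) (x y : R) (a b : nat) :
  0 < x -> 0 < y ->
  (forall t, 0 < t < y -> (1 + t / x) ^+ a * (1 - t / y) ^+ b <= 1) ->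
  a%:R / x <= b%:R / y.
Proof.
move=> x_gt0 y_gt0 le1; rewrite leNgt; apply/negP.
set p := a%:R / x; set q := b%:R / y => qp.
have p_ge0 : 0 <= p by rewrite divr_ge0 // ltW.
have q_ge0 : 0 <= q by rewrite divr_ge0 // ltW.
have lower t : 0 < t < y ->
    (1 + p * t) * (1 - q * t) <= (1 + t / x) ^+ a * (1 - t / y) ^+ b.
  case/andP=> t_gt0 ty.
  have u_gt0 : 0 < t / x by rewrite divr_gt0.
  have v_lt1 : t / y < 1 by rewrite ltr_pdivrMr // mul1r.
  have -> : p * t = a%:R * (t / x) by rewrite /p mulrAC mulrA.
  have -> : q * t = b%:R * (t / y) by rewrite /q mulrAC mulrA.
  have bu : 1 + a%:R * (t / x) <= (1 + t / x) ^+ a by apply: bernoulli_ineq; lra.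
  have bv : 1 - b%:R * (t / y) <= (1 - t / y) ^+ b.
    by rewrite -mulrN; apply: bernoulli_ineq; lra.
  apply: le_trans (ler_wpM2l _ bv) (ler_wpM2r _ bu).
  - by rewrite addr_ge0 // mulr_ge0 // ltW.
  - by apply: exprn_ge0; lra.
(* By Bernoulli the product is at least 1 + t (p - q - p q t), which exceeds 1 at this t. *)
pose t := y * (p - q) / (2 * (p - q + p * q * y)).
have pqy_ge0 : 0 <= p * q * y by apply: mulr_ge0; [exact: mulr_ge0 | exact: ltW].
have den_gt0 : 0 < 2 * (p - q + p * q * y) by lra.
have tE : t * (2 * (p - q + p * q * y)) = y * (p - q) by rewrite divfK ?gt_eqF.
have t_gt0 : 0 < t by rewrite divr_gt0 // mulr_gt0 // subr_gt0.
have ty : t < y by nra.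
have pqt : p * q * t < p - q by nra.
have := le_trans (lower t _) (le1 t _); rewrite t_gt0 ty => /(_ isT isT).
nra.
Qed.

Lemma perturb_le1_div_eq (R : realFieldType) (x y : R) (a b : nat) :
  0 < x -> 0 < y ->
  (forall t, - x < t < y -> (1 + t / x) ^+ a * (1 - t / y) ^+ b <= 1) ->
  a%:R / x = b%:R / y.
Proof.
move=> x_gt0 y_gt0 le1; apply/eqP; rewrite eq_le; apply/andP; split.
  apply: perturb_le1_div_le => // t /andP[t_gt0 ty]; apply: le1.
  by rewrite ty andbT; lra.
apply: perturb_le1_div_le => // t /andP[t_gt0 tx]; rewrite mulrC.
have := le1 (- t); rewrite !mulNr opprK; apply.
by rewrite ltrN2 tx /=; lra.
Qed.

Lemma measurable_set_gt0 (R : realType) : measurable [set x : R | 0 < x].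
Proof. by rewrite -set_itvoy; exact: measurable_itv. Qed.

Section IntegralFacts.
Context d (T : measurableType d) (R : realType) (mu : {measure set T -> \bar R}).
Variables (D : set T) (mD : measurable D).

Lemma fine_ge0_integralZl (f : T -> R) (c : R) :
  measurable_fun D f -> (forall x, D x -> 0 <= f x) -> 0 <= c ->
  fine (\int[mu]_(x in D) (c * f x)%:E) = c * fine (\int[mu]_(x in D) (f x)%:E).
Proof.
move=> mf f_ge0 c_ge0.
under eq_integral do rewrite EFinM.
rewrite ge0_integralZl_EFin //; last exact/measurable_EFinP.
set I := (\int[mu]_(x in D) _)%E.
have I_ge0 : (0 <= I)%E by apply: integral_ge0 => x Dx; rewrite lee_fin f_ge0.
have [I_fin|] := boolP (I \is a fin_num); first by rewrite fineM.
rewrite ge0_fin_numE // -leNgt leye_eq => /eqP ->.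
have [->|c_gt0] := eqVneq c 0; first by rewrite mul0e mul0r.
by rewrite gt0_muley ?lte_fin ?lt0r ?c_gt0 ?mulr0.
Qed.

Lemma integral_mul_density_gt0 (f g : T -> R) :
  measurable_fun D f -> measurable_fun D g ->
  (forall x, D x -> 0 < f x <= 1) -> (forall x, D x -> 0 <= g x) ->
  (\int[mu]_(x in D) (g x)%:E = 1)%E ->
  (0 < \int[mu]_(x in D) (f x * g x)%:E < +oo)%E.
Proof.
move=> mf mg f01 g_ge0 int_g.
have mfg : measurable_fun D (EFin \o (fun x => f x * g x)).
  exact/measurable_EFinP/measurable_funM.
have fg_ge0 x : D x -> (0 <= (f x * g x)%:E)%E.
  by move=> Dx; have /andP[/ltW f_ge0 _] := f01 x Dx; rewrite lee_fin mulr_ge0 ?g_ge0.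
apply/andP; split; last first.
  apply: (@le_lt_trans _ _ 1%E); last exact: ltey.
  rewrite -int_g; apply: ge0_le_integral => //; first exact/measurable_EFinP.
  move=> x Dx; have /andP[_ f_le1] := f01 x Dx.
  by rewrite lee_fin ler_piMl ?g_ge0.
rewrite lt0e integral_ge0 // andbT; apply/eqP => int_fg.
(* f > 0 on D, so f g = 0 a.e. forces g = 0 a.e., contradicting the unit mass of g *)
have : ae_eq mu D (EFin \o (fun x => f x * g x)) (cst 0%E).
  apply/(ae_eq_integral_abs mu mD mfg); rewrite -int_fg.
  by apply: eq_integral => x /set_mem Dx; rewrite gee0_abs ?fg_ge0.
move=> fg0; suff : (\int[mu]_(x in D) (g x)%:E = 0)%E.
  by rewrite int_g => /eqP; rewrite onee_eq0.
rewrite (ae_eq_integral (cst 0%E)) ?integral0 //; first exact/measurable_EFinP.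
apply: filterS fg0 => x fgx Dx; have /= /eqP := fgx Dx.
rewrite eqe mulf_eq0 => /orP[/eqP f0|/eqP ->] //.
by have /andP[] := f01 x Dx; rewrite f0 ltxx.
Qed.

End IntegralFacts.

Lemma poisson_pmf_le1 (R : realType) (y : R) (k : nat) :
  0 <= y -> expR (- y) * y ^+ k / k`!%:R <= 1.
Proof.
move=> y_ge0; rewrite expRN -mulrA mulrC ler_pdivrMr ?expR_gt0 // mul1r.
case: k => [|k]; first by rewrite expr0 fact0 divr1 -[1]addr0 (le_trans _ (expR_ge1Dx y)) ?lerD.
by rewrite (le_trans _ (expR_ge1Dxn k y_ge0)) // lerDr.
Qed.

Section RandomEffectsLikelihood.
Variables (R : realType) (m J : nat) (S : 'I_m -> 'I_J -> R) (n : 'I_m -> 'I_J -> nat).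

Lemma measurable_poisson_prod (lam : 'I_J -> R) (i : 'I_m) (D : set R) :
  measurable_fun D (poisson_prod S n lam i).
Proof.
have mlin j : measurable_fun D (fun a : R => lam j * a * S i j).
  by apply: measurable_funM => //; apply: measurable_funM.
apply: measurable_prod => j _; apply: measurable_funM => //.
apply: measurable_funM; last exact: measurable_funX.
exact: measurableT_comp (measurable_funN (mlin j)).
Qed.

Lemma poisson_prod_rescale (lam lam' : 'I_J -> R) (i : 'I_m) (a : R) :
  (forall j, lam j != 0) ->
  \sum_(j < J) lam' j * S i j = \sum_(j < J) lam j * S i j ->
  poisson_prod S n lam' i a =
  (\prod_(j < J) (lam' j / lam j) ^+ n i j) * poisson_prod S n lam i a.
Proof.
move=> lam_neq0 same_total.
have shift_eq0 : \sum_(j < J) - ((lam' j - lam j) * a * S i j) = 0.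
  rewrite sumrN (_ : \sum_(j < J) _ = a * (\sum_(j < J) lam' j * S i j
                                      - \sum_(j < J) lam j * S i j)).
    by rewrite same_total subrr mulr0 oppr0.
  by rewrite -sumrB mulr_sumr; apply: eq_bigr => j _; ring.
have factor j :
    expR (- (lam' j * a * S i j)) * (lam' j * a * S i j) ^+ n i j / (n i j)`!%:R =
    expR (- ((lam' j - lam j) * a * S i j)) * ((lam' j / lam j) ^+ n i j *
      (expR (- (lam j * a * S i j)) * (lam j * a * S i j) ^+ n i j / (n i j)`!%:R)).
  have -> : expR (- (lam' j * a * S i j)) =
      expR (- ((lam' j - lam j) * a * S i j)) * expR (- (lam j * a * S i j)).
    by rewrite -expRD; congr expR; ring.
  have -> : lam' j * a * S i j = lam' j / lam j * (lam j * a * S i j) by field.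
  by rewrite exprMn; ring.
rewrite /poisson_prod -big_split /=; under eq_bigr do rewrite factor.
(* the exponential factors only see the total intensity, which is unchanged *)
by rewrite big_split /= -expR_sum shift_eq0 expR0 mul1r.
Qed.

Hypothesis S_gt0 : forall i j, 0 < S i j.

Lemma poisson_prod_gt0_le1 (lam : 'I_J -> R) (i : 'I_m) (a : R) :
  (forall j, 0 < lam j) -> 0 < a -> 0 < poisson_prod S n lam i a <= 1.
Proof.
move=> lam_gt0 a_gt0.
have x_gt0 j : 0 < lam j * a * S i j by rewrite !mulr_gt0.
apply/andP; split.
  apply: prodr_gt0 => j _.
  by rewrite divr_gt0 ?ltr0n ?fact_gt0 // mulr_gt0 ?expR_gt0 ?exprn_gt0.
apply: prodr_ile1 => j _; rewrite poisson_pmf_le1 ?andbT; last exact: ltW.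
by rewrite divr_ge0 // mulr_ge0 ?expR_ge0 // exprn_ge0 // ltW.
Qed.

Variables (Theta : Type) (h : Theta -> R -> R).
Hypothesis h_density : forall theta, is_mean1_pos_density (h theta).

Lemma RE_integral_gt0_lty (lam : 'I_J -> R) (theta : Theta) (i : 'I_m) :
  (forall j, 0 < lam j) ->
  (0 < \int[@lebesgue_measure R]_(a in [set x : R | (0 < x)%R])
         (poisson_prod S n lam i a * h theta a)%:E < +oo)%E.
Proof.
move=> lam_gt0; have [mh [h_ge0 [int_h _]]] := h_density theta.
apply: integral_mul_density_gt0 => //.
- exact: measurable_set_gt0.
- exact: measurable_poisson_prod.
- by move=> a; apply: poisson_prod_gt0_le1.
Qed.

Lemma RE_lik_gt0 (lam : 'I_J -> R) (theta : Theta) :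
  (forall j, 0 < lam j) -> 0 < RE_lik S n h lam theta.
Proof.
move=> lam_gt0; apply: prodr_gt0 => i _.
have /andP[I_gt0 I_lty] := RE_integral_gt0_lty theta i lam_gt0.
by rewrite fine_gt0 // I_gt0 I_lty.
Qed.

Lemma RE_lik_rescale (lam lam' : 'I_J -> R) (theta : Theta) :
  (forall j, 0 < lam j) -> (forall j, 0 < lam' j) ->
  (forall i, \sum_(j < J) lam' j * S i j = \sum_(j < J) lam j * S i j) ->
  RE_lik S n h lam' theta =
  (\prod_(j < J) (lam' j / lam j) ^+ n_col n j) * RE_lik S n h lam theta.
Proof.
move=> lam_gt0 lam'_gt0 same_total; have [mh [h_ge0 _]] := h_density theta.
rewrite (_ : \prod_(j < J) _ = \prod_(i < m) \prod_(j < J) (lam' j / lam j) ^+ n i j).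
  rewrite /RE_lik -big_split /=; apply: eq_bigr => i _.
  under eq_integral do rewrite (poisson_prod_rescale _
    (fun j => lt0r_neq0 (lam_gt0 j)) (same_total i)) -mulrA.
  apply: fine_ge0_integralZl.
  - exact: measurable_set_gt0.
  - by apply: measurable_funM => //; exact: measurable_poisson_prod.
  - move=> a a_gt0; have /andP[/ltW pp_ge0 _] := poisson_prod_gt0_le1 i lam_gt0 a_gt0.
    by rewrite mulr_ge0 ?h_ge0.
  - by apply: prodr_ge0 => j _; rewrite exprn_ge0 // divr_ge0 // ltW.
by rewrite exchange_big; apply: eq_bigr => j _; rewrite prodrXr.
Qed.

End RandomEffectsLikelihood.

Section ConstantArea.
Variables (R : realType) (m J : nat) (S : 'I_m -> 'I_J -> R) (n : 'I_m -> 'I_J -> nat).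
Variable Sj : 'I_J -> R.
Hypothesis S_const : forall i j, S i j = Sj j.
Hypothesis Sj_gt0 : forall j, 0 < Sj j.

Lemma naive_est_proportional (l : 'I_J) :
  (n_col n l)%:R = m%:R * (naive_est S n l * Sj l).
Proof.
rewrite /naive_est (eq_bigl xpredT) => [|i]; last by rewrite S_const Sj_gt0.
have -> : #|[set i : 'I_m | 0 < S i l]| = m.
  rewrite -[RHS]card_ord; apply: eq_card => i.
  by rewrite inE; apply/mem_set; rewrite /= S_const.
under eq_bigr do rewrite S_const.
rewrite -mulr_suml -natr_sum -/(n_col n l).
have [m0|m_neq0] := eqVneq (m%:R : R) 0; last by field; rewrite m_neq0 lt0r_neq0.
rewrite m0 mul0r /n_col big1 // => i _.
move/eqP: m0; rewrite pnatr_eq0 => /eqP m0.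
by have := ltn_ord i; rewrite [X in (_ < X)%N]m0.
Qed.

Lemma CML_est_proportional (lam : 'I_J -> R) (l : 'I_J) : is_CML_est S n lam ->
  (n_col n l)%:R =
  (\sum_(i < m) n_row n i)%:R / (\sum_(j < J) Sj j * lam j) * (lam l * Sj l).
Proof.
move=> [lam_gt0 score]; have := score l.
under eq_bigr do rewrite S_const; under eq_bigr do under eq_bigr do rewrite S_const.
rewrite sumrB -!mulr_suml -!natr_sum => /eqP; rewrite subr_eq0 => /eqP score_l.
by rewrite -[LHS](divfK (lt0r_neq0 (lam_gt0 l))) score_l; ring.
Qed.

Definition transfer (lam : 'I_J -> R) (j k : 'I_J) (t : R) : 'I_J -> R :=
  fun l => if l == j then lam j + t / Sj j
           else if l == k then lam k - t / Sj k else lam l.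

Section Transfer.
Variables (lam : 'I_J -> R) (j k : 'I_J) (t : R).
Hypothesis lam_gt0 : forall l, 0 < lam l.
Hypothesis jk : j != k.

Lemma transfer_gt0 : - (lam j * Sj j) < t < lam k * Sj k ->
  forall l, 0 < transfer lam j k t l.
Proof.
case/andP=> tj tk l; rewrite /transfer.
have [_|lj] := eqVneq l j.
  have : - lam j < t / Sj j by rewrite ltr_pdivlMr // mulNr.
  lra.
have [_|lk] := eqVneq l k; last exact: lam_gt0.
have : t / Sj k < lam k by rewrite ltr_pdivrMr.
lra.
Qed.

Lemma transfer_other (l : 'I_J) : l != j -> l != k -> transfer lam j k t l = lam l.
Proof. by move=> /negbTE lj /negbTE lk; rewrite /transfer lj lk. Qed.

Lemma sum_transfer :
  \sum_(l < J) transfer lam j k t l * Sj l = \sum_(l < J) lam l * Sj l.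
Proof.
rewrite (bigD1 j) // [RHS](bigD1 j) //= (bigD1 k) 1?eq_sym //.
rewrite [in RHS](bigD1 k) 1?eq_sym //= (eq_bigr (fun l => lam l * Sj l)).
  rewrite /transfer eqxx eq_sym (negbTE jk) eqxx mulrDl mulrBl.
  by rewrite !divfK ?lt0r_neq0 //; ring.
by move=> l /andP[lj lk]; rewrite transfer_other.
Qed.

Lemma prod_transfer_ratio (c : 'I_J -> nat) :
  \prod_(l < J) (transfer lam j k t l / lam l) ^+ c l =
  (1 + t / (lam j * Sj j)) ^+ c j * (1 - t / (lam k * Sj k)) ^+ c k.
Proof.
rewrite (bigD1 j) // (bigD1 k) 1?eq_sym //= big1 ?mulr1; last first.
  by move=> l /andP[lj lk]; rewrite transfer_other // divff ?expr1n ?lt0r_neq0.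
rewrite /transfer eqxx eq_sym (negbTE jk) eqxx.
have Sj_neq0 := lt0r_neq0 (Sj_gt0 _); have lam_neq0 := lt0r_neq0 (lam_gt0 _).
by congr (_ ^+ _ * _ ^+ _); field; rewrite Sj_neq0 lam_neq0.
Qed.

End Transfer.

Variables (Theta : Type) (h : Theta -> R -> R).
Hypothesis h_density : forall theta, is_mean1_pos_density (h theta).

Lemma RE_est_transfer_le1 (lam : 'I_J -> R) (theta : Theta) (j k : 'I_J) (t : R) :
  is_RE_est S n h lam theta -> j != k ->
  - (lam j * Sj j) < t < lam k * Sj k ->
  (1 + t / (lam j * Sj j)) ^+ n_col n j * (1 - t / (lam k * Sj k)) ^+ n_col n k <= 1.
Proof.
move=> [lam_gt0 lam_max] jk t_range.
have S_gt0 i l : 0 < S i l by rewrite S_const.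
have lam'_gt0 := transfer_gt0 lam_gt0 t_range.
have same_total i :
    \sum_(l < J) transfer lam j k t l * S i l = \sum_(l < J) lam l * S i l.
  under eq_bigr do rewrite S_const; under [RHS]eq_bigr do rewrite S_const.
  exact: sum_transfer.
have := lam_max _ theta lam'_gt0.
rewrite (RE_lik_rescale n S_gt0 h_density theta lam_gt0 lam'_gt0 same_total).
rewrite prod_transfer_ratio // -[X in _ <= X]mul1r ler_pM2r //.
exact: (RE_lik_gt0 n S_gt0 h_density).
Qed.

Lemma RE_est_proportional (lam : 'I_J -> R) (theta : Theta) (j k : 'I_J) :
  is_RE_est S n h lam theta ->
  (n_col n j)%:R = (n_col n k)%:R / (lam k * Sj k) * (lam j * Sj j).
Proof.
move=> RE_lam; have [lam_gt0 _] := RE_lam.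
have x_gt0 l : 0 < lam l * Sj l by rewrite mulr_gt0.
have [<-|jk] := eqVneq j k; first by rewrite divfK ?lt0r_neq0.
have le1 t := @RE_est_transfer_le1 lam theta j k t RE_lam jk.
by rewrite -(perturb_le1_div_eq (x_gt0 j) (x_gt0 k) le1) divfK ?lt0r_neq0.
Qed.

End ConstantArea.

Theorem proposition1 (R : realType) (m J : nat)
  (S : 'I_m -> 'I_J -> R) (n : 'I_m -> 'I_J -> nat) (Sj : 'I_J -> R)
  (Theta : Type) (h : Theta -> R -> R) :
  (forall i j, S i j = Sj j) ->
  (forall j, 0 < Sj j) ->
  (forall theta, is_mean1_pos_density (h theta)) ->
  forall j k : 'I_J, (0 < n_col n k)%N ->
  [/\ naive_est S n j / naive_est S n k
        = (n_col n j)%:R / (n_col n k)%:R * (Sj k / Sj j),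
      (forall lam theta, is_RE_est S n h lam theta ->
         lam j / lam k = (n_col n j)%:R / (n_col n k)%:R * (Sj k / Sj j))
    & (forall lam, is_CML_est S n lam ->
         lam j / lam k = (n_col n j)%:R / (n_col n k)%:R * (Sj k / Sj j))].
Proof.
move=> S_const Sj_gt0 h_density j k col_k_gt0.
have col_k_neq0 : (n_col n k)%:R != 0 :> R by rewrite pnatr_eq0 -lt0n.
have Sj_neq0 := lt0r_neq0 (Sj_gt0 j).
split.
- exact: div_eq_of_proportional (naive_est_proportional n S_const Sj_gt0 j)
    (naive_est_proportional n S_const Sj_gt0 k) col_k_neq0 Sj_neq0.
- move=> lam theta RE_lam.
  exact: div_eq_of_proportional (RE_est_proportional S_const Sj_gt0 h_density j k RE_lam)
    (RE_est_proportional S_const Sj_gt0 h_density k k RE_lam) col_k_neq0 Sj_neq0.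
- move=> lam CML_lam.
  exact: div_eq_of_proportional (CML_est_proportional S_const j CML_lam)
    (CML_est_proportional S_const k CML_lam) col_k_neq0 Sj_neq0.
Qed.
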